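(* Consider any run of Algorithm 1 (described in the context) under the standing assumption. The number of successful iterations performed before an $(\epsilon_g,\epsilon_H)$-stationary point is reached satisfies \[ |\mathcal{S}|\ \le\ \Big\lfloor \mathcal{C}_{\mathcal S}\max\{\epsilon_H^{-1},\ \epsilon_g^{-2}\epsilon_H,\ \epsilon_H^{-3}\}\Big\rfloor+1, \qquad \mathcal{C}_{\mathcal S}:=\tfrac{4(f_0-f_{\rm low})}{\eta}\max\Big\{\tfrac{1}{\delta_0^2},\ \tfrac{L_H^2}{9\gamma_1^2(1-\eta)^2},\ 1+2L_H\Big\}. \]
   Context: Let $f:\mathbb{R}^n\to\mathbb{R}$ with gradient $g=\nabla f$ and Hessian $H=\nabla^2 f$; $\|\cdot\|$ is the Euclidean norm and $\lambda_{\min}(\cdot)$ the smallest eigenvalue of a symmetric matrix. A point $x$ is $(\epsilon_g,\epsilon_H)$-stationary if $\|g(x)\|\le\epsilon_g$ and $\lambda_{\min}(H(x))\ge-\epsilon_H$. Write $f_k=f(x_k)$, $g_k=g(x_k)$, $H_k=H(x_k)$ and $m_k(x):=f_k+g_k^T(x-x_k)+\tfrac12(x-x_k)^TH_k(x-x_k)$. Algorithm 1 (exact trust-region Newton method). Inputs: tolerances $\epsilon_g,\epsilon_H>0$; parameters $\gamma_1\in(0,1)$, $\gamma_2\in[1,\infty)$, $\psi\in(1/\gamma_2,1]$; $x_0\in\mathbb{R}^n$; $\delta_0>0$; $\delta_{\max}\ge\delta_0$; $\eta\in(0,1)$. For $k=0,1,2,\dots$: evaluate $g_k,H_k$; if $\|g_k\|\le\epsilon_g$,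 compute $\lambda_k=\lambda_{\min}(H_k)$ and, if $\lambda_k\ge-\epsilon_H$, return $x_k$ (terminate). Otherwise compute $s_k$ as a global solution of $\min_{s}\ m_k(x_k+s)+\tfrac12\epsilon_H\|s\|^2$ subject to $\|s\|\le\delta_k$. Set $\rho_k=\frac{f_k-f(x_k+s_k)}{m_k(x_k)-m_k(x_k+s_k)}$. If $\rho_k\ge\eta$: $x_{k+1}=x_k+s_k$, and $\delta_{k+1}=\min\{\gamma_2\delta_k,\delta_{\max}\}$ if $\|s_k\|\ge\psi\delta_k$, else $\delta_{k+1}=\delta_k$. If $\rho_k<\eta$: $x_{k+1}=x_k$ and $\delta_{k+1}=\gamma_1\|s_k\|$. $\mathcal{K}$ is the set of indices $k$ such that iteration $k$ is completed without termination; $\mathcal{S}=\{k\in\mathcal{K}:\rho_k\ge\eta\}$ (successful iterations). Standing assumption: the sequence $\{f_k\}$ is bounded below by some $f_{\rm low}\in\mathbb{R}$, and all segments $[x_k,x_k+s_k]$ lie in an open set on which $f$ is twice continuously differentiable with gradient Lipschitz continuous with constant $L_g>0$ and Hessian Lipschitz continuous with constant $L_H>0$. *)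

From HB Require Import structures.
From mathcomp Require Import all_boot all_order all_algebra.
From mathcomp Require Import all_classical all_reals all_analysis.
Set Implicit Arguments. Unset Strict Implicit. Unset Printing Implicit Defensive.
Import Order.TTheory GRing.Theory Num.Theory.
Import numFieldNormedType.Exports.
Local Open Scope ring_scope.

Section Defs.
Variables (R : realType) (n : nat).

Definition dotv (u v : 'cV[R]_n) : R := (u^T *m v) 0 0.
Definition enorm (u : 'cV[R]_n) : R := Num.sqrt (dotv u u).

(* x is an (eps_g, eps_H)-stationary point: ||g(x)|| <= eps_g and
   lambda_min(H(x)) >= -eps_H, i.e. every (real) eigenvalue of the
   (symmetric) matrix H(x) is >= -eps_H. *)
Definition stationary (g : 'cV[R]_n -> 'cV[R]_n) (H : 'cV[R]_n -> 'M[R]_n)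
  (eps_g eps_H : R) (x : 'cV[R]_n) : Prop :=
  enorm (g x) <= eps_g /\ (forall a : R, eigenvalue (H x) a -> - eps_H <= a).

(* quadratic model m_k(x_k + s) - f_k  =  g_k^T s + 1/2 s^T H_k s *)
Definition model_incr (gk : 'cV[R]_n) (Hk : 'M[R]_n) (s : 'cV[R]_n) : R :=
  dotv gk s + 2^-1 * dotv s (Hk *m s).

(* objective of the regularized trust-region subproblem (up to the constant f_k) *)
Definition tr_obj (eps_H : R) (gk : 'cV[R]_n) (Hk : 'M[R]_n) (s : 'cV[R]_n) : R :=
  model_incr gk Hk s + 2^-1 * eps_H * enorm s ^+ 2.

Definition tr_solution (eps_H : R) (gk : 'cV[R]_n) (Hk : 'M[R]_n) (delta : R)
  (s : 'cV[R]_n) : Prop :=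
  enorm s <= delta /\
  forall s' : 'cV[R]_n, enorm s' <= delta -> tr_obj eps_H gk Hk s <= tr_obj eps_H gk Hk s'.

Definition rho_ratio (f : 'cV[R]_n -> R) (g : 'cV[R]_n -> 'cV[R]_n)
  (H : 'cV[R]_n -> 'M[R]_n) (x s : 'cV[R]_n) : R :=
  (f x - f (x + s)) / (- model_incr (g x) (H x) s).

Definition C2_on (U : set 'cV[R]_n) (f : 'cV[R]_n -> R)
  (g : 'cV[R]_n -> 'cV[R]_n) (H : 'cV[R]_n -> 'M[R]_n) : Prop :=
  open U /\
  forall x, U x ->
    [/\ differentiable f x, ('d f x : 'cV[R]_n -> R) = (fun h => dotv (g x) h),
        differentiable g x, ('d g x : 'cV[R]_n -> 'cV[R]_n) = (fun h => H x *m h)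
      & {for x, continuous H}].

End Defs.

(* Every successful iteration decreases f by at least [eta eps_H ||s_k||^2 / 2], since the
   regularised subproblem gives [m_k(x_k) - m_k(x_k + s_k) >= eps_H ||s_k||^2 / 2]. Call the step
   large when [eps_H ||s_k||^2 >= 1 / (K M)], K and M being the two maxima of the bound. A step on
   the trust-region boundary is large because the cubic Taylor bound keeps every radius above
   [min (delta_0, 3 gamma_1 (1 - eta) eps_H / L_H)]; an interior step is large as soon as the new
   gradient exceeds eps_g, because there [g + H s = - eps_H s] and hence
   [||g (x_k + s_k)|| <= L_H ||s_k||^2 / 2 + eps_H ||s_k||]. If instead the new gradient is small,
   the new point is not stationary, so its Hessian has curvature below [- eps_H] and the next
   successful step lies on the boundary. Hence at most one more than half of the successful steps
   are not large, and summing the decreases against [f_0 - f_low] gives the bound. The symmetry of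
   H, needed for the optimality condition of the subproblem, follows from the Lipschitz continuity
   of H through second differences of f. *)

From HB Require Import structures.
From mathcomp Require Import all_boot all_order all_algebra.
From mathcomp Require Import all_classical all_reals all_analysis.
From mathcomp Require Import ring lra zify.
Set Implicit Arguments. Unset Strict Implicit. Unset Printing Implicit Defensive.
Import Order.TTheory GRing.Theory Num.Theory.
Import numFieldNormedType.Exports.
Local Open Scope ring_scope.

Section Euclid.
Variables (R : realType) (n : nat).
Implicit Types (u v w : 'cV[R]_n) (a : R).

Lemma dotvE u v : dotv u v = \sum_i u i 0 * v i 0.
Proof. by rewrite /dotv !mxE; apply: eq_bigr => i _; rewrite mxE. Qed.

Lemma dotvC u v : dotv u v = dotv v u.
Proof. by rewrite !dotvE; apply: eq_bigr => i _; rewrite mulrC. Qed.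

Lemma dotvDl u v w : dotv (u + v) w = dotv u w + dotv v w.
Proof. by rewrite !dotvE -big_split; apply: eq_bigr => i _; rewrite mxE mulrDl. Qed.

Lemma dotvDr u v w : dotv w (u + v) = dotv w u + dotv w v.
Proof. by rewrite dotvC dotvDl !(dotvC w). Qed.

Lemma dotvZl a u v : dotv (a *: u) v = a * dotv u v.
Proof. by rewrite !dotvE mulr_sumr; apply: eq_bigr => i _; rewrite mxE mulrA. Qed.

Lemma dotvZr a u v : dotv v (a *: u) = a * dotv v u.
Proof. by rewrite dotvC dotvZl dotvC. Qed.

Lemma dotvNl u v : dotv (- u) v = - dotv u v.
Proof. by rewrite -scaleN1r dotvZl mulN1r. Qed.

Lemma dotvNr u v : dotv v (- u) = - dotv v u.
Proof. by rewrite dotvC dotvNl dotvC. Qed.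

Lemma dotvBl u v w : dotv (u - v) w = dotv u w - dotv v w.
Proof. by rewrite dotvDl dotvNl. Qed.

Lemma dotvBr u v w : dotv w (u - v) = dotv w u - dotv w v.
Proof. by rewrite dotvDr dotvNr. Qed.

Lemma dotv0l u : dotv 0 u = 0.
Proof. by rewrite -(scale0r 0) dotvZl mul0r. Qed.

Lemma dotv0r u : dotv u 0 = 0.
Proof. by rewrite dotvC dotv0l. Qed.

Lemma dotvv_ge0 u : 0 <= dotv u u.
Proof. by rewrite dotvE; apply: sumr_ge0 => i _; rewrite -expr2 sqr_ge0. Qed.

Lemma dotvv_eq0 u : dotv u u = 0 -> u = 0.
Proof.
rewrite dotvE => /eqP; rewrite psumr_eq0 => [/allP u0|i _]; last by rewrite -expr2 sqr_ge0.
apply/matrixP => i j; rewrite (ord1 j) mxE.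
by have /implyP/(_ isT) := u0 i (mem_index_enum i); rewrite -expr2 sqrf_eq0 => /eqP.
Qed.

Lemma enorm_ge0 u : 0 <= enorm u.
Proof. exact: sqrtr_ge0. Qed.

Lemma enorm_sqr u : enorm u ^+ 2 = dotv u u.
Proof. by rewrite /enorm sqr_sqrtr // dotvv_ge0. Qed.

Lemma enorm0 : enorm (0 : 'cV[R]_n) = 0.
Proof. by rewrite /enorm dotv0l sqrtr0. Qed.

Lemma enorm_eq0 u : enorm u = 0 -> u = 0.
Proof. by move=> u0; apply: dotvv_eq0; rewrite -enorm_sqr u0 expr0n. Qed.

Lemma enormZ a u : enorm (a *: u) = `|a| * enorm u.
Proof. by rewrite /enorm dotvZl dotvZr mulrA -expr2 sqrtrM ?sqr_ge0 // sqrtr_sqr. Qed.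

Lemma enormN u : enorm (- u) = enorm u.
Proof. by rewrite -scaleN1r enormZ normrN normr1 mul1r. Qed.

Lemma dotv_sqr_le u v : dotv u v ^+ 2 <= dotv u u * dotv v v.
Proof.
set a := dotv v v; set b := dotv u v; set c := dotv u u.
have a0 : 0 <= a := dotvv_ge0 v.
(* the quadratic [t |-> |u - t v|^2] is nonnegative; take [t = b / a] *)
have quad_ge0 t : 0 <= c - 2 * t * b + t ^+ 2 * a.
  have := dotvv_ge0 (u - t *: v).
  by rewrite !dotvBl !dotvBr !dotvZl !dotvZr (dotvC v u) -/a -/b -/c; nra.
have [a_eq0|a_neq0] := eqVneq a 0.
  have [->|b_neq0] := eqVneq b 0; first by rewrite expr0n /= mulr_ge0 ?dotvv_ge0.
  have := quad_ge0 ((c + 1) / (2 * b)).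
  have -> : c - 2 * ((c + 1) / (2 * b)) * b + ((c + 1) / (2 * b)) ^+ 2 * a = -1.
    by rewrite a_eq0; field.
  by rewrite ler0N1.
have a_gt0 : 0 < a by rewrite lt_def a_neq0.
have := quad_ge0 (b / a).
have -> : c - 2 * (b / a) * b + (b / a) ^+ 2 * a = (c * a - b ^+ 2) / a by field.
by rewrite pmulr_lge0 ?invr_gt0 //; lra.
Qed.

Lemma normr_dotv_le u v : `|dotv u v| <= enorm u * enorm v.
Proof.
rewrite /enorm -sqrtrM ?dotvv_ge0 // -(sqrtr_sqr (dotv u v)).
by rewrite ler_sqrt ?mulr_ge0 ?dotvv_ge0 // dotv_sqr_le.
Qed.

Lemma dotv_le u v : dotv u v <= enorm u * enorm v.
Proof. exact: le_trans (ler_norm _) (normr_dotv_le u v). Qed.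

Lemma enormD u v : enorm (u + v) <= enorm u + enorm v.
Proof.
rewrite -(ler_pXn2r (_ : (0 < 2)%N)) ?nnegrE ?addr_ge0 ?enorm_ge0 //.
rewrite enorm_sqr dotvDl !dotvDr (dotvC v u) sqrrD !enorm_sqr.
by have := dotv_le u v; nra.
Qed.

Lemma enormB u v : enorm (u - v) <= enorm u + enorm v.
Proof. by rewrite -(enormN v) enormD. Qed.

Lemma normr_entry_le_enorm u i : `|u i 0| <= enorm u.
Proof.
rewrite -(ler_pXn2r (_ : (0 < 2)%N)) ?nnegrE ?enorm_ge0 // enorm_sqr dotvE.
rewrite real_normK ?num_real // (bigD1 i) //= -expr2 lerDl.
by apply: sumr_ge0 => j _; rewrite -expr2 sqr_ge0.
Qed.

Lemma dotv_is_linear w : linear (dotv w).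
Proof. by move=> a u v; rewrite dotvDr dotvZr. Qed.

Lemma dotv_differentiable w p : differentiable (dotv w) p.
Proof.
have -> : dotv w = \sum_(i < n) (w i 0 *: (fun v : 'cV[R]_n => v i 0)).
  by apply/funext => v; rewrite dotvE fct_sumE; apply: eq_bigr.
by apply: differentiable_sum => i; apply: differentiableZ; exact: differentiable_coord.
Qed.

Lemma diff_dotv w p : 'd (dotv w) p = dotv w :> ('cV[R]_n -> R).
Proof.
pose L : {linear 'cV[R]_n -> R} :=
  HB.pack (dotv w) (GRing.isLinear.Build _ _ _ _ _ (dotv_is_linear w)).
have L_cont : continuous L by move=> q; apply/differentiable_continuous/dotv_differentiable.
exact: (@diff_lin _ _ _ L p L_cont).
Qed.

Lemma open_enorm_ball (U : set 'cV[R]_n) p :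
  open U -> U p -> exists2 r, 0 < r & forall q, enorm (q - p) < r -> U q.
Proof.
move=> oU Up; have /nbhs_ballP [r r0 ballU] : nbhs p U by apply: open_nbhs_nbhs.
exists r => // q qp; apply: ballU; rewrite -ball_normE /=; apply: le_lt_trans qp.
rewrite [X in X <= _]mx_normrE; apply: bigmax_le => [|[i j] _ /=]; first exact: enorm_ge0.
by rewrite (ord1 j) !mxE distrC; apply: le_trans (normr_entry_le_enorm (q - p) i); rewrite !mxE.
Qed.

Lemma eigenvalue_rayleigh (A : 'M[R]_n) a : eigenvalue A a ->
  exists2 u : 'cV[R]_n, 0 < dotv u u & dotv u (A *m u) = a * dotv u u.
Proof.
move=> /eigenvalueP [v Av v_neq0]; exists v^T.
  rewrite lt_def dotvv_ge0 andbT; apply: contraNneq v_neq0 => /dotvv_eq0.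
  by move/(congr1 trmx); rewrite trmxK trmx0 => ->.
by rewrite /dotv trmxK mulmxA Av -scalemxAl mxE.
Qed.

End Euclid.

Section RealFacts.
Local Open Scope classical_set_scope.
Variable R : realType.

Lemma le0_of_le_small (d K r : R) :
  0 < r -> (forall t, 0 < t -> t < r -> d <= t * K) -> d <= 0.
Proof.
move=> r0 small; rewrite leNgt; apply/negP => d0.
have K1 : 0 < `|K| + 1 by rewrite ltr_pwDr.
pose t := Num.min (r / 2) (d / (2 * (`|K| + 1))).
have t0 : 0 < t by rewrite lt_min !divr_gt0 ?mulr_gt0.
have tr : t < r by rewrite gt_min ltr_pdivrMr ?ltr_pMr ?ltr1n.
have td : t * (2 * (`|K| + 1)) <= d by rewrite -ler_pdivlMr ?mulr_gt0 // ge_min lexx orbT.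
have := small t t0 tr; have := ler_norm K; nra.
Qed.

Lemma eq0_of_quadratic_ge0 (a c tau : R) : 0 < tau ->
  (forall t, `|t| <= tau -> 0 <= t * a + t ^+ 2 * c) -> a = 0.
Proof.
move=> tau0 quad_ge0.
suff le0 (b : R) : (forall t, 0 < t -> t < tau -> 0 <= t * b + t ^+ 2 * c) -> - b <= 0.
  apply/eqP; rewrite eq_le; apply/andP; split.
    rewrite -oppr_ge0 -[a]opprK oppr_ge0; apply: (le0 (- a)) => t t0 ttau.
    by have := quad_ge0 (- t); rewrite normrN gtr0_norm // ltW // => /(_ isT); rewrite sqrrN; lra.
  by rewrite -oppr_le0; apply: le0 => t t0 ttau; apply: quad_ge0; rewrite gtr0_norm // ltW.
move=> quad_b_ge0; apply: (le0_of_le_small (K := c) tau0) => t t0 ttau.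
have := quad_b_ge0 t t0 ttau; rewrite expr2 -mulrA -mulrDr pmulr_rge0 //; lra.
Qed.

Lemma poly3_derive (b c d t : R) :
  derivable (fun s : R => b * s + c / 2 * s ^+ 2 + d / 3 * s ^+ 3) t 1 /\
  derive1 (fun s : R => b * s + c / 2 * s ^+ 2 + d / 3 * s ^+ 3) t = b + c * t + d * t ^+ 2.
Proof.
have h1 : is_derive t (1:R) (fun s : R => b * s) b by apply: is_derive_eq; exact: mulr1.
have h2 : is_derive t (1:R) (fun s : R => c / 2 * s ^+ 2) (c * t).
  by apply: is_derive_eq; change ((c / 2) * (t * 1 + t * 1) = c * t); field.
have h3 : is_derive t (1:R) (fun s : R => d / 3 * s ^+ 3) (d * t ^+ 2).
  apply: is_derive_eq.
  by change ((d / 3) * (t * (t * 1 + t * 1) + (t * t) * 1) = d * t ^+ 2); field.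
have h := is_deriveD (is_deriveD h1 h2) h3.
by split; [exact: ex_derive | rewrite derive1E derive_val].
Qed.

Lemma increment01_le_poly (F : R -> R) (b c d : R) :
  (forall t, 0 <= t <= 1 -> derivable F t 1) ->
  (forall t, 0 < t < 1 -> derive1 F t <= b + c * t + d * t ^+ 2) ->
  F 1 - F 0 <= b + c / 2 + d / 3.
Proof.
move=> dF F'_le.
pose P s := b * s + c / 2 * s ^+ 2 + d / 3 * s ^+ 3.
pose G := F - P.
have dG t : 0 <= t <= 1 -> derivable G t 1.
  by move=> t01; apply: derivableB; [exact: dF | case: (poly3_derive b c d t)].
have G'_le0 t : t \in `]0, 1[%R -> derive1 G t <= 0.
  rewrite in_itv /= => /andP[t0 t1]; have [dP P'] := poly3_derive b c d t.
  rewrite derive1E deriveB; last by []; last by apply: dF; rewrite !ltW.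
  by rewrite -!derive1E P' subr_le0; apply: F'_le; rewrite t0.
have G_cont : {within `[0, 1], continuous G}.
  apply: continuous_in_subspaceT => t; rewrite inE /= in_itv /= => t01.
  by apply/differentiable_continuous/derivable1_diffP/dG.
have dG_open t : t \in `]0, 1[%R -> derivable G t 1.
  by rewrite in_itv /= => /andP[t0 t1]; apply: dG; rewrite !ltW.
have := @ler0_derive1_le_cc R G 0 1 dG_open G'_le0 G_cont 1 0.
rewrite !in_itv /= !lexx ler01 => /(_ isT isT isT).
rewrite /G /P /= !fctE /= !expr1n !mulr1 !expr0n /= !mulr0 !addr0 subr0; lra.
Qed.

End RealFacts.

Lemma line_derive (R : realType) (V : normedModType R) (F : V -> R) (y a : V) (t : R) :
  differentiable F (y + t *: a) ->
  derivable (fun r : R => F (y + r *: a)) t 1 /\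
  derive1 (fun r : R => F (y + r *: a)) t = 'd F (y + t *: a) a.
Proof.
move=> dF; pose line := (cst y + ( *:%R ^~ a)) : R -> V.
have line_diff : is_diff t line (0 + ( *:%R ^~ a)) by apply: is_diffD.
have dline : differentiable line t by exact: ex_diff.
have dFline : differentiable (F \o line) t by apply: differentiable_comp.
change (derivable (F \o line) t 1 /\ derive1 (F \o line) t = 'd F (y + t *: a) a).
split; first exact: diff_derivable.
by rewrite derive1E' // diff_comp // (@diff_val _ _ _ _ _ _ _ line_diff) /= add0r scale1r.
Qed.

Section Taylor.
Variables (R : realType) (n : nat) (f : 'cV[R]_n -> R) (g : 'cV[R]_n -> 'cV[R]_n)
  (H : 'cV[R]_n -> 'M[R]_n) (U : set 'cV[R]_n) (L : R).
Hypothesis f_C2 : C2_on U f g H.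
Hypothesis L_ge0 : 0 <= L.
Hypothesis H_lipschitz : forall y z v, U y -> U z ->
  enorm ((H y - H z) *m v) <= L * enorm (y - z) * enorm v.

Lemma segment_start (y a : 'cV[R]_n) :
  (forall t, 0 <= t <= 1 -> U (y + t *: a)) -> U y.
Proof. by move=> segU; have := segU 0; rewrite scale0r addr0 lexx ler01; apply. Qed.

Lemma dotv_grad_differentiable (w p : 'cV[R]_n) : U p ->
  differentiable (dotv w \o g) p /\ forall a, 'd (dotv w \o g) p a = dotv w (H p *m a).
Proof.
move=> Up; have [_ /(_ p Up) [_ _ dg dgE _]] := f_C2.
have dd : differentiable (dotv w) (g p) by apply: dotv_differentiable.
by split=> [|a]; [exact: differentiable_comp | rewrite diff_comp // diff_dotv /= dgE].
Qed.

Lemma dotv_grad_taylor_le (y a w : 'cV[R]_n) :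
  (forall t, 0 <= t <= 1 -> U (y + t *: a)) ->
  dotv w (g (y + a) - g y - H y *m a) <= L / 2 * enorm a ^+ 2 * enorm w.
Proof.
move=> segU; have Uy := segment_start segU.
have := @increment01_le_poly R (fun t => (dotv w \o g) (y + t *: a))
  (dotv w (H y *m a)) (L * enorm a ^+ 2 * enorm w) 0.
rewrite /= scale1r scale0r addr0 mul0r addr0 !dotvBr => incr_le.
suff : dotv w (g (y + a)) - dotv w (g y) <=
       dotv w (H y *m a) + L * enorm a ^+ 2 * enorm w / 2 by lra.
apply: incr_le => [t t01|t /andP[t0 t1]].
  by have [dG _] := dotv_grad_differentiable w (segU t t01); case: (line_derive dG).
have t01 : 0 <= t <= 1 by rewrite !ltW.
have [dG dGE] := dotv_grad_differentiable w (segU t t01).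
have [_ ->] := line_derive dG; rewrite dGE mul0r addr0.
have : dotv w ((H (y + t *: a) - H y) *m a) <= L * enorm a ^+ 2 * enorm w * t.
  apply: le_trans (dotv_le _ _) _.
  have := H_lipschitz a (segU t t01) Uy.
  rewrite addrAC subrr add0r enormZ (ger0_norm (ltW t0)).
  have := enorm_ge0 w; have := enorm_ge0 a; have := enorm_ge0 ((H (y + t *: a) - H y) *m a).
  nra.
by rewrite mulmxBl dotvBr; lra.
Qed.

Lemma enorm_grad_taylor_le (y a : 'cV[R]_n) :
  (forall t, 0 <= t <= 1 -> U (y + t *: a)) ->
  enorm (g (y + a) - g y - H y *m a) <= L / 2 * enorm a ^+ 2.
Proof.
move=> segU; set r := _ - _ - _.
have := dotv_grad_taylor_le r segU; rewrite -enorm_sqr.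
have : 0 <= L / 2 * enorm a ^+ 2 by rewrite mulr_ge0 ?divr_ge0 ?sqr_ge0.
set c := L / 2 * enorm a ^+ 2; have := enorm_ge0 r; nra.
Qed.

Definition taylor2_rem (y a : 'cV[R]_n) :=
  f (y + a) - f y - dotv (g y) a - 2^-1 * dotv a (H y *m a).

Lemma scaled_taylor_le (y a : 'cV[R]_n) (c : R) : `|c| <= 1 ->
  (forall t, 0 <= t <= 1 -> U (y + t *: a)) ->
  c * taylor2_rem y a <= L / 6 * enorm a ^+ 3.
Proof.
move=> c1 segU; rewrite /taylor2_rem.
have := @increment01_le_poly R (fun t => c * f (y + t *: a))
  (c * dotv (g y) a) (c * dotv a (H y *m a)) (L / 2 * enorm a ^+ 3).
rewrite /= scale1r scale0r addr0 => incr_le.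
suff : c * f (y + a) - c * f y <= c * dotv (g y) a + c * dotv a (H y *m a) / 2 +
  L / 2 * enorm a ^+ 3 / 3 by rewrite !mulrBr; lra.
apply: incr_le => [t t01|t /andP[t0 t1]].
  have [_ /(_ _ (segU t t01)) [df _ _ _ _]] := f_C2.
  by have [d _] := line_derive df; apply: derivableZ.
have t01 : 0 <= t <= 1 by rewrite !ltW.
have [_ /(_ _ (segU t t01)) [df dfE _ _ _]] := f_C2.
have [d dE] := line_derive df.
rewrite derive1E deriveZ // -derive1E dE dfE.
have segU_t s : 0 <= s <= 1 -> U (y + s *: (t *: a)).
  move=> /andP[s0 s1]; rewrite scalerA; apply: segU.
  apply/andP; split; [exact: mulr_ge0 s0 (ltW t0) | exact: mulr_ile1 s0 (ltW t0) s1 (ltW t1)].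
have := enorm_grad_taylor_le segU_t.
rewrite enormZ (ger0_norm (ltW t0)) -scalemxAr.
set r := _ - _ - _ => r_le.
have -> : g (y + t *: a) = r + g y + t *: (H y *m a) by rewrite /r addrAC !subrK.
clearbody r; rewrite !dotvDl dotvZl (dotvC (H y *m a) a).
change (c * (dotv r a + dotv (g y) a + t * dotv a (H y *m a)) <=
  c * dotv (g y) a + c * dotv a (H y *m a) * t + L / 2 * enorm a ^+ 3 * t ^+ 2).
have : c * dotv r a <= L / 2 * enorm a ^+ 3 * t ^+ 2.
  apply: le_trans (ler_norm _) _; rewrite normrM.
  have := normr_dotv_le r a; have := normr_ge0 (dotv r a).
  have := enorm_ge0 a; have := enorm_ge0 r; have := normr_ge0 c; nra.
lra.
Qed.

Lemma normr_taylor_le (y a : 'cV[R]_n) :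
  (forall t, 0 <= t <= 1 -> U (y + t *: a)) ->
  `|taylor2_rem y a| <= L / 6 * enorm a ^+ 3.
Proof.
move=> segU; rewrite ler_norml; apply/andP; split.
  by have := @scaled_taylor_le y a (-1); rewrite normrN normr1 lexx => /(_ isT segU); lra.
by have := @scaled_taylor_le y a 1; rewrite normr1 lexx => /(_ isT segU); lra.
Qed.

End Taylor.

Section HessianSymmetry.
Variables (R : realType) (n : nat) (f : 'cV[R]_n -> R) (g : 'cV[R]_n -> 'cV[R]_n)
  (H : 'cV[R]_n -> 'M[R]_n) (U : set 'cV[R]_n) (L : R).
Hypothesis f_C2 : C2_on U f g H.
Hypothesis L_ge0 : 0 <= L.
Hypothesis H_lipschitz : forall y z v, U y -> U z ->
  enorm ((H y - H z) *m v) <= L * enorm (y - z) * enorm v.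

Lemma ball_segment (p a b : 'cV[R]_n) (r : R) :
  (forall q, enorm q <= r -> U (p + q)) -> enorm a + enorm b <= r ->
  forall s, 0 <= s <= 1 -> U (p + a + s *: b).
Proof.
move=> ballU ab_le s /andP[s0 s1]; rewrite -addrA; apply: ballU.
apply: le_trans (enormD _ _) (le_trans _ ab_le); rewrite lerD2l enormZ ger0_norm //.
exact: ler_piMl (enorm_ge0 b) s1.
Qed.

Definition second_diff (p u v : 'cV[R]_n) (t : R) :=
  f (p + t *: u + t *: v) - f (p + t *: u) - f (p + t *: v) + f p.

Lemma second_diffC p u v t : second_diff p u v t = second_diff p v u t.
Proof. by rewrite /second_diff [p + t *: v + _]addrAC; lra. Qed.

Lemma second_diff_split (p u v : 'cV[R]_n) (t : R) :
  second_diff p u v t - t ^+ 2 * dotv (H p *m u) v =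
  taylor2_rem f g H (p + t *: u) (t *: v) - taylor2_rem f g H p (t *: v)
  + t * dotv (g (p + t *: u) - g p - H p *m (t *: u)) v
  + 2^-1 * (t ^+ 2 * dotv v ((H (p + t *: u) - H p) *m v)).
Proof.
rewrite /second_diff /taylor2_rem -!scalemxAr !dotvZl !dotvZr.
by rewrite !dotvBl mulmxBl !dotvBr !dotvZl; lra.
Qed.

Lemma second_diff_taylor (p u v : 'cV[R]_n) (t : R) : 0 < t ->
  (forall q, enorm q <= t * (enorm u + enorm v) -> U (p + q)) ->
  `|second_diff p u v t - t ^+ 2 * dotv (H p *m u) v| <=
  t ^+ 3 * (L * (enorm u + enorm v) ^+ 3).
Proof.
move=> t0 ballU; have nu := enorm_ge0 u; have nv := enorm_ge0 v.
have tu : enorm (t *: u) = t * enorm u by rewrite enormZ gtr0_norm.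
have tv : enorm (t *: v) = t * enorm v by rewrite enormZ gtr0_norm.
have uv_le : enorm (t *: u) + enorm (t *: v) <= t * (enorm u + enorm v) by rewrite tu tv mulrDr.
have seg_uv := ball_segment ballU uv_le.
have seg_v s : 0 <= s <= 1 -> U (p + s *: (t *: v)).
  move=> s01; have := ball_segment (a := 0) (b := t *: v) ballU _ s01; rewrite addr0; apply.
  by rewrite enorm0 add0r tv ler_pM2l // lerDr.
have seg_u s : 0 <= s <= 1 -> U (p + s *: (t *: u)).
  move=> s01; have := ball_segment (a := 0) (b := t *: u) ballU _ s01; rewrite addr0; apply.
  by rewrite enorm0 add0r tu ler_pM2l // lerDl.
have := normr_taylor_le f_C2 L_ge0 H_lipschitz seg_uv.
have := normr_taylor_le f_C2 L_ge0 H_lipschitz seg_v.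
have := enorm_grad_taylor_le f_C2 L_ge0 H_lipschitz seg_u.
have := H_lipschitz v (segment_start seg_uv) (segment_start seg_u).
rewrite second_diff_split addrAC subrr add0r tu tv.
set r_p := taylor2_rem _ _ _ _ _; set r_pu := taylor2_rem _ _ _ _ _; set w := g _ - _ - _.
set e := (H (p + t *: u) - H p) *m v => e_le w_le r_p_le r_pu_le.
have w_dot : `|t * dotv w v| <= t ^+ 3 * (L / 2 * enorm u ^+ 2 * enorm v).
  rewrite normrM gtr0_norm //; apply: le_trans (ler_wpM2l (ltW t0) (normr_dotv_le w v)) _.
  have := ler_wpM2r (mulr_ge0 (ltW t0) nv) w_le; lra.
have e_dot : `|t ^+ 2 * dotv v e| <= t ^+ 3 * (L * enorm u * enorm v ^+ 2).
  rewrite normrM gtr0_norm ?exprn_gt0 //.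
  apply: le_trans (ler_wpM2l (ltW (exprn_gt0 2 t0)) (normr_dotv_le v e)) _.
  have := ler_wpM2l (mulr_ge0 (ltW (exprn_gt0 2 t0)) nv) e_le; lra.
have cube_le : L / 3 * enorm v ^+ 3 + L / 2 * enorm u ^+ 2 * enorm v +
    L / 2 * enorm u * enorm v ^+ 2 <= L * (enorm u + enorm v) ^+ 3.
  have := mulr_ge0 L_ge0 (exprn_ge0 3 nu); have := mulr_ge0 L_ge0 (exprn_ge0 3 nv).
  have := mulr_ge0 (mulr_ge0 L_ge0 (exprn_ge0 2 nu)) nv.
  have := mulr_ge0 (mulr_ge0 L_ge0 nu) (exprn_ge0 2 nv); lra.
have := ler_normD (r_pu - r_p + t * dotv w v) (2^-1 * (t ^+ 2 * dotv v e)).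
have := ler_normD (r_pu - r_p) (t * dotv w v); have := ler_normB r_pu r_p.
rewrite [`|2^-1 * _|]normrM (@gtr0_norm _ 2^-1) ?invr_gt0 //.
have := ler_wpM2l (ltW (exprn_gt0 3 t0)) cube_le; nra.
Qed.

Lemma hessian_sym (p u v : 'cV[R]_n) : U p -> dotv (H p *m u) v = dotv (H p *m v) u.
Proof.
move=> Up; have [r r0 ballU] := open_enorm_ball f_C2.1 Up.
set S := enorm u + enorm v; have S0 : 0 <= S by rewrite addr_ge0 ?enorm_ge0.
suff : `|dotv (H p *m u) v - dotv (H p *m v) u| <= 0.
  by rewrite normr_le0 subr_eq0 => /eqP.
apply: (le0_of_le_small (K := 2 * (L * S ^+ 3)) (_ : 0 < r / (S + 1))) => [|t t0 tr].
  by rewrite divr_gt0 // ltr_pwDr.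
have tS : t * S < r by move: tr; rewrite ltr_pdivlMr ?ltr_pwDr //; nra.
have ball_uv q : enorm q <= t * S -> U (p + q).
  by move=> q_le; apply: ballU; rewrite addrC addKr; apply: le_lt_trans tS.
have ball_vu q : enorm q <= t * (enorm v + enorm u) -> U (p + q) by rewrite addrC; apply: ball_uv.
have := second_diff_taylor t0 ball_uv; have := second_diff_taylor t0 ball_vu.
rewrite second_diffC (addrC (enorm v)) -/S.
set D := second_diff _ _ _ _; set A := dotv _ v; set B := dotv _ u => B_le A_le.
have t2 : 0 < t ^+ 2 := exprn_gt0 2 t0.
rewrite -(ler_pM2l t2).
have -> : t ^+ 2 * `|A - B| = `|(D - t ^+ 2 * B) - (D - t ^+ 2 * A)|.
  by rewrite -[t ^+ 2 in LHS]gtr0_norm // -normrM; congr `|_|; ring.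
apply: le_trans (ler_normB _ _) _; lra.
Qed.

End HessianSymmetry.

Section TrustRegion.
Variables (R : realType) (n : nat) (e : R) (gk : 'cV[R]_n) (Hk : 'M[R]_n).
Variables (delta : R) (s : 'cV[R]_n).
Hypothesis s_sol : tr_solution e gk Hk delta s.

Definition tr_slope (v : 'cV[R]_n) :=
  dotv gk v + 2^-1 * (dotv s (Hk *m v) + dotv v (Hk *m s)) + e * dotv s v.
Definition tr_curv (v : 'cV[R]_n) := dotv v (Hk *m v) + e * dotv v v.

Lemma tr_objD v t :
  tr_obj e gk Hk (s + t *: v) = tr_obj e gk Hk s + t * tr_slope v + t ^+ 2 / 2 * tr_curv v.
Proof.
rewrite /tr_obj /model_incr /tr_slope /tr_curv !enorm_sqr.
by rewrite mulmxDr -scalemxAr !dotvDl !dotvDr !dotvZl !dotvZr (dotvC v s); lra.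
Qed.

Lemma tr_interior_room v : enorm s < delta ->
  exists2 tau, 0 < tau & forall t, `|t| <= tau -> enorm (s + t *: v) <= delta.
Proof.
move=> s_int; have nv := enorm_ge0 v.
exists ((delta - enorm s) / (enorm v + 1)) => [|t t_le].
  by rewrite divr_gt0 ?subr_gt0 ?ltr_pwDr.
apply: le_trans (enormD _ _) _; rewrite enormZ.
move: t_le; rewrite ler_pdivlMr ?ltr_pwDr //; have := normr_ge0 t; nra.
Qed.

Lemma tr_slope_interior v : enorm s < delta -> tr_slope v = 0.
Proof.
move=> s_int; have [tau tau0 room] := tr_interior_room v s_int.
apply: (eq0_of_quadratic_ge0 (c := tr_curv v / 2) tau0) => t /room /s_sol.2.
by rewrite tr_objD; lra.
Qed.

Lemma tr_boundary_of_neg_curv u : tr_curv u < 0 -> enorm s = delta.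
Proof.
move=> curv_lt0; apply/eqP; rewrite eq_le s_sol.1 leNgt; apply/negP => s_int.
have [tau tau0 room] := tr_interior_room u s_int.
have tau_le : `|tau| <= tau by rewrite ger0_norm // ltW.
have := s_sol.2 _ (room tau tau_le).
rewrite tr_objD tr_slope_interior // mulr0 addr0.
have := exprn_gt0 2 tau0; nra.
Qed.

Lemma tr_model_decrease : e / 2 * enorm s ^+ 2 <= - model_incr gk Hk s.
Proof.
have := s_sol.2 0; rewrite /tr_obj /model_incr enorm0 dotv0r dotv0l expr0n /= mulr0.
by move=> /(_ (le_trans (enorm_ge0 s) s_sol.1)); lra.
Qed.

Lemma tr_interior_stationary : (forall u v, dotv (Hk *m u) v = dotv (Hk *m v) u) ->
  enorm s < delta -> gk + Hk *m s + e *: s = 0.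
Proof.
move=> Hk_sym s_int; apply: dotvv_eq0.
have := tr_slope_interior (gk + Hk *m s + e *: s) s_int.
rewrite /tr_slope (dotvC s) Hk_sym (dotvC _ (Hk *m s)) !dotvDl dotvZl; lra.
Qed.

End TrustRegion.

Section StepLowerBounds.
Variable R : realType.

Lemma one_le_mul_mono (K M K0 M0 x : R) : 0 <= K0 <= K -> 0 <= M0 <= M -> 0 <= x ->
  1 <= K0 * M0 * x -> 1 <= K * M * x.
Proof.
move=> /andP[K00 K0K] /andP[M00 M0M] x0 /le_trans; apply.
by rewrite ler_wpM2r // ler_pM.
Qed.

Lemma one_le_step_of_grad (K M eH eg L sig : R) :
  0 < eH -> 0 < eg -> 0 <= L -> 0 < sig ->
  1 + 2 * L <= K -> eg ^- 2 * eH <= M -> eH ^- 3 <= M ->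
  eg < L / 2 * sig ^+ 2 + eH * sig -> 1 <= K * M * (eH * sig ^+ 2).
Proof.
move=> eH0 eg0 L0 sig0 K_ge M_ge_g M_ge_H eg_lt.
have x0 : 0 <= eH * sig ^+ 2 by rewrite ltW // mulr_gt0 ?exprn_gt0.
have K0 : 0 <= 1 + 2 * L <= K by rewrite K_ge addr_ge0 ?mulr_ge0.
have [eH_le|sig_small] := lerP (eH ^+ 2) ((1 + 2 * L) * sig ^+ 2).
  apply: (one_le_mul_mono (M0 := eH ^- 3) K0 _ x0); first by rewrite M_ge_H invr_ge0 exprn_ge0 ?ltW.
  have -> : (1 + 2 * L) * eH ^- 3 * (eH * sig ^+ 2) = (1 + 2 * L) * sig ^+ 2 / eH ^+ 2.
    by field; rewrite gt_eqF.
  by rewrite ler_pdivlMr ?exprn_gt0 // mul1r.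
apply: (one_le_mul_mono (M0 := eg ^- 2 * eH) K0 _ x0).
  by rewrite M_ge_g mulr_ge0 ?invr_ge0 ?exprn_ge0 ?ltW.
have -> : (1 + 2 * L) * (eg ^- 2 * eH) * (eH * sig ^+ 2) =
    (1 + 2 * L) * eH ^+ 2 * sig ^+ 2 / eg ^+ 2 by field; rewrite gt_eqF.
rewrite ler_pdivlMr ?exprn_gt0 // mul1r.
(* a small step makes the gradient bound [L sig^2 / 2 + eH sig] at most [sqrt(1 + 2L) eH sig] *)
have Lsig0 := mulr_ge0 L0 (sqr_ge0 sig).
have sig_lt : sig < eH by rewrite -(ltr_pXn2r (_ : (0 < 2)%N)) ?nnegrE ?ltW //; lra.
have Lsig : 2 * (L * sig ^+ 2) <= eH ^+ 2 by have := sqr_ge0 sig; lra.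
have bound0 : 0 <= sig * (L / 2 * sig + eH).
  by have := mulr_gt0 eH0 sig0; lra.
have : eg ^+ 2 <= (sig * (L / 2 * sig + eH)) ^+ 2.
  by rewrite ler_pXn2r ?nnegrE ?(ltW eg0) //; lra.
move/le_trans; apply; rewrite exprMn -mulrA [_ * sig ^+ 2]mulrC ler_wpM2l ?sqr_ge0 //.
have := mulr_ge0 L0 (ltW sig0); have := mulr_ge0 L0 (ltW eH0); nra.
Qed.

Lemma one_le_step_of_radius (K M eH L g1 eta d0 sig : R) :
  0 < eH -> 0 < L -> 0 < g1 -> eta < 1 -> 0 < d0 ->
  Num.min d0 (3 * g1 * (1 - eta) * eH / L) <= sig ->
  d0 ^- 2 <= K -> L ^+ 2 / (9 * g1 ^+ 2 * (1 - eta) ^+ 2) <= K ->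
  eH ^-1 <= M -> eH ^- 3 <= M -> 1 <= K * M * (eH * sig ^+ 2).
Proof.
move=> eH0 L0 g10 eta1 d00 sig_ge K_ge_d K_ge_L M_ge_1 M_ge_3.
set c := 3 * g1 * (1 - eta) * eH / L in sig_ge.
have c0 : 0 < c by rewrite divr_gt0 // !mulr_gt0 // subr_gt0.
have sig0 : 0 < sig by apply: lt_le_trans sig_ge; rewrite lt_min d00 c0.
have x0 : 0 <= eH * sig ^+ 2 by rewrite ltW // mulr_gt0 ?exprn_gt0.
have [d0_le|c_lt] := leP d0 c.
  rewrite (min_l d0_le) in sig_ge; apply: (one_le_mul_mono (K0 := d0 ^- 2) (M0 := eH ^-1) _ _ x0).
  - by rewrite K_ge_d invr_ge0 exprn_ge0 ?ltW.
  - by rewrite M_ge_1 invr_ge0 ltW.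
  have -> : d0 ^- 2 * eH ^-1 * (eH * sig ^+ 2) = (sig / d0) ^+ 2 by field; rewrite !gt_eqF.
  by rewrite exprn_ege1 // ler_pdivlMr // mul1r.
rewrite (min_r (ltW c_lt)) in sig_ge.
apply: (one_le_mul_mono (K0 := L ^+ 2 / (9 * g1 ^+ 2 * (1 - eta) ^+ 2)) (M0 := eH ^- 3) _ _ x0).
- rewrite K_ge_L andbT divr_ge0 ?sqr_ge0 //.
  by have := sqr_ge0 g1; have := sqr_ge0 (1 - eta); nra.
- by rewrite M_ge_3 invr_ge0 exprn_ge0 ?ltW.
have -> : L ^+ 2 / (9 * g1 ^+ 2 * (1 - eta) ^+ 2) * eH ^- 3 * (eH * sig ^+ 2) = (sig / c) ^+ 2.
  by rewrite /c; field; rewrite !gt_eqF ?subr_gt0.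
by rewrite exprn_ege1 // ler_pdivlMr // mul1r.
Qed.

Lemma natr_le_floor_add1 (R' : realType) (k : nat) (y : R') :
  (k%:R : R') <= y + 1 -> (k%:R : R') <= (Num.floor y)%:~R + 1.
Proof.
move=> k_le; have : ((k%:Z - 1)%:~R : R') <= y by rewrite intrD -pmulrn; lra.
by rewrite -floor_ge_int -(ler_int R') intrD -pmulrn; lra.
Qed.

End StepLowerBounds.

Section Algorithm.
Variables (R : realType) (n : nat)
  (f : 'cV[R]_n -> R) (g : 'cV[R]_n -> 'cV[R]_n) (H : 'cV[R]_n -> 'M[R]_n)
  (eps_g eps_H gamma1 gamma2 psi delta_max eta : R)
  (x : nat -> 'cV[R]_n) (delta : nat -> R) (s : nat -> 'cV[R]_n)
  (f_low L_H : R) (U : set 'cV[R]_n) (N : nat).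
Hypothesis eps_g_gt0 : 0 < eps_g.
Hypothesis eps_H_gt0 : 0 < eps_H.
Hypothesis gamma1_01 : 0 < gamma1 < 1.
Hypothesis gamma2_ge1 : 1 <= gamma2.
Hypothesis delta0_gt0 : 0 < delta 0.
Hypothesis delta0_le : delta 0 <= delta_max.
Hypothesis eta_01 : 0 < eta < 1.
Hypothesis f_low_le : f_low <= f (x N).
Hypothesis L_H_gt0 : 0 < L_H.
Hypothesis f_C2 : C2_on U f g H.
Hypothesis H_lipschitz : forall y z v, U y -> U z ->
  enorm ((H y - H z) *m v) <= L_H * enorm (y - z) * enorm v.
Hypothesis segment_in_U :
  forall k, (k < N)%N -> forall t : R, 0 <= t <= 1 -> U (x k + t *: s k).
Hypothesis not_stationary : forall k, (k < N)%N -> ~ stationary g H eps_g eps_H (x k).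
Hypothesis iteration : forall k, (k < N)%N ->
  [/\ tr_solution eps_H (g (x k)) (H (x k)) (delta k) (s k),
      eta <= rho_ratio f g H (x k) (s k) ->
        x k.+1 = x k + s k /\
        delta k.+1 = (if psi * delta k <= enorm (s k)
                      then Num.min (gamma2 * delta k) delta_max else delta k)
    & rho_ratio f g H (x k) (s k) < eta ->
        x k.+1 = x k /\ delta k.+1 = gamma1 * enorm (s k)].

Let L_H_ge0 : 0 <= L_H := ltW L_H_gt0.

Let successful k := eta <= rho_ratio f g H (x k) (s k).
Let K := Num.max (delta 0 ^- 2)
  (Num.max (L_H ^+ 2 / (9 * gamma1 ^+ 2 * (1 - eta) ^+ 2)) (1 + 2 * L_H)).
Let M := Num.max (eps_H^-1) (Num.max (eps_g ^- 2 * eps_H) (eps_H ^- 3)).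
(* a successful iteration is [large] when it decreases f by at least [eta / (2 K M)] *)
Let large k := successful k && (1 <= K * M * (eps_H * enorm (s k) ^+ 2)).
Let delta_min := Num.min (delta 0) (3 * gamma1 * (1 - eta) * eps_H / L_H).

Lemma step_solution k : (k < N)%N ->
  tr_solution eps_H (g (x k)) (H (x k)) (delta k) (s k).
Proof. by case/iteration. Qed.

Lemma successful_step k : (k < N)%N -> successful k ->
  x k.+1 = x k + s k /\
  delta k.+1 = (if psi * delta k <= enorm (s k)
                then Num.min (gamma2 * delta k) delta_max else delta k).
Proof. by move=> kN succ_k; case: (iteration kN) => _ /(_ succ_k). Qed.

Lemma unsuccessful_step k : (k < N)%N -> ~~ successful k ->
  x k.+1 = x k /\ delta k.+1 = gamma1 * enorm (s k).
Proof. by move=> kN; rewrite -ltNge => fail_k; case: (iteration kN) => _ _ /(_ fail_k). Qed.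

Lemma hessian_iterate_sym k u v : (k < N)%N ->
  dotv (H (x k) *m u) v = dotv (H (x k) *m v) u.
Proof.
move=> kN; apply: (hessian_sym f_C2 L_H_ge0 H_lipschitz).
exact: segment_start (segment_in_U kN).
Qed.

Lemma neg_curv_of_small_grad k : (k < N)%N -> enorm (g (x k)) <= eps_g ->
  exists u, tr_curv eps_H (H (x k)) u < 0.
Proof.
move=> kN g_small.
have /existsNP [a /not_implyP [eig_a a_lt]] :
    ~ (forall a, eigenvalue (H (x k)) a -> - eps_H <= a).
  by move=> eig_ge; apply: (not_stationary kN).
have [u u0 uHu] := eigenvalue_rayleigh eig_a.
by exists u; rewrite /tr_curv uHu; move/negP: a_lt; rewrite -ltNge; nra.
Qed.

Lemma step_gt0_of_radius k : (k < N)%N -> 0 < delta k -> 0 < enorm (s k).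
Proof.
move=> kN delta_gt0; rewrite lt_def enorm_ge0 andbT; apply/eqP => s0.
have s_int : enorm (s k) < delta k by rewrite s0.
(* a zero step would make [x k] a stationary point of the subproblem, hence of f *)
have g0 : g (x k) = 0.
  have := tr_slope_interior (step_solution kN) (g (x k)) s_int.
  by rewrite /tr_slope (enorm_eq0 s0) mulmx0 !dotv0l !dotv0r !(mulr0, addr0) => /dotvv_eq0.
have [|u curv_lt0] := neg_curv_of_small_grad kN; first by rewrite g0 enorm0 ltW.
by move: delta_gt0; rewrite -(tr_boundary_of_neg_curv (step_solution kN) curv_lt0) s0 ltxx.
Qed.

Lemma model_decrease k : (k < N)%N ->
  eps_H / 2 * enorm (s k) ^+ 2 <= - model_incr (g (x k)) (H (x k)) (s k).
Proof. by move=> kN; apply: tr_model_decrease (step_solution kN). Qed.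

Lemma unsuccessful_step_large k : (k < N)%N -> 0 < enorm (s k) -> ~~ successful k ->
  3 * (1 - eta) * eps_H / L_H < enorm (s k).
Proof.
move=> kN s_gt0; apply: contraNT; rewrite -leNgt => s_le.
have := model_decrease kN; have := normr_taylor_le f_C2 L_H_ge0 H_lipschitz (segment_in_U kN).
rewrite /successful /rho_ratio; set m := - model_incr _ _ _; set sig := enorm (s k).
move: s_le; rewrite /m /model_incr ler_pdivlMr // => s_le f_err m_ge.
have m_gt0 : 0 < m by apply: lt_le_trans m_ge; rewrite mulr_gt0 ?divr_gt0 ?exprn_gt0.
(* the cubic Taylor error [L_H sig^3 / 6] is at most [(1 - eta) eps_H sig^2 / 2] *)
have cubic_le : sig ^+ 2 * (sig * L_H) <= sig ^+ 2 * (3 * (1 - eta) * eps_H).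
  by rewrite ler_wpM2l ?sqr_ge0.
rewrite ler_pdivlMr //; move: f_err; rewrite /m /model_incr /taylor2_rem ler_norml.
have eta_le1 : 0 <= 1 - eta by rewrite subr_ge0 ltW // (andP eta_01).2.
have := ler_wpM2l eta_le1 m_ge; lra.
Qed.

Lemma radius_bounds k : (k <= N)%N ->
  [/\ 0 < delta k, delta k <= delta_max & delta_min <= delta k].
Proof.
elim: k => [|k IH] kN; first by split; rewrite // /delta_min ge_min lexx.
have [delta_gt0 delta_le delta_ge] := IH (ltnW kN).
have [g10 g11] := andP gamma1_01.
have s_le := (step_solution kN).1.
have [succ_k|fail_k] := boolP (successful k).
  have [_ ->] := successful_step kN succ_k.
  have delta_le_min : delta k <= Num.min (gamma2 * delta k) delta_max.
    by rewrite le_min delta_le andbT ler_peMl // ltW.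
  case: ifP => _; last by split.
  split; [exact: lt_le_trans delta_le_min | by rewrite ge_min lexx orbT |].
  exact: le_trans delta_le_min.
have [_ ->] := unsuccessful_step kN fail_k.
have s_gt0 := step_gt0_of_radius kN delta_gt0.
have s_gt := unsuccessful_step_large kN s_gt0 fail_k.
split; first by rewrite mulr_gt0.
  by apply: le_trans delta_le; apply: le_trans s_le; rewrite ler_piMl ?enorm_ge0 ?ltW.
rewrite /delta_min ge_min.
have -> : 3 * gamma1 * (1 - eta) * eps_H / L_H = gamma1 * (3 * (1 - eta) * eps_H / L_H).
  by ring.
by rewrite ler_pM2l // (ltW s_gt) orbT.
Qed.

Lemma step_gt0 k : (k < N)%N -> 0 < enorm (s k).
Proof. by move=> kN; case: (radius_bounds (ltnW kN)) => /(step_gt0_of_radius kN). Qed.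

Lemma successful_decrease k : (k < N)%N -> successful k ->
  eta * (eps_H / 2 * enorm (s k) ^+ 2) <= f (x k) - f (x k.+1).
Proof.
move=> kN succ_k; have [-> _] := successful_step kN succ_k.
have m_ge := model_decrease kN.
have s_gt0 := step_gt0 kN.
have m_gt0 : 0 < - model_incr (g (x k)) (H (x k)) (s k).
  by apply: lt_le_trans m_ge; rewrite mulr_gt0 ?divr_gt0 ?exprn_gt0.
move: succ_k; rewrite /successful /rho_ratio ler_pdivlMr // => /(le_trans _); apply.
by rewrite ler_wpM2l // ltW // (andP eta_01).1.
Qed.

Lemma K_M_bounds :
  [/\ delta 0 ^- 2 <= K, L_H ^+ 2 / (9 * gamma1 ^+ 2 * (1 - eta) ^+ 2) <= K,
      1 + 2 * L_H <= K, eps_H ^-1 <= M & eps_g ^- 2 * eps_H <= M /\ eps_H ^- 3 <= M].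
Proof. by rewrite /K /M !le_max !lexx /= !orbT. Qed.

Lemma large_of_boundary k : (k < N)%N -> successful k -> enorm (s k) = delta k -> large k.
Proof.
move=> kN succ_k s_eq; rewrite /large succ_k /=.
have [K_d K_L _ M_1 [_ M_3]] := K_M_bounds.
apply: (one_le_step_of_radius eps_H_gt0 L_H_gt0 (andP gamma1_01).1 (andP eta_01).2
  delta0_gt0 _ K_d K_L M_1 M_3).
by rewrite s_eq; case: (radius_bounds (ltnW kN)).
Qed.

Lemma large_of_grad k : (k < N)%N -> successful k -> enorm (s k) < delta k ->
  eps_g < enorm (g (x k.+1)) -> large k.
Proof.
move=> kN succ_k s_int g_gt; rewrite /large succ_k /=.
have s_gt0 := step_gt0 kN.
have [_ _ K_1 _ [M_g M_3]] := K_M_bounds.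
apply: (one_le_step_of_grad eps_H_gt0 eps_g_gt0 L_H_ge0 s_gt0 K_1 M_g M_3).
apply: (lt_le_trans g_gt); have [-> _] := successful_step kN succ_k.
(* at an interior solution [g + H s = - eps_H s], so [g (x + s)] is a Taylor remainder *)
have stat := tr_interior_stationary (step_solution kN)
  (fun u v => hessian_iterate_sym u v kN) s_int.
have -> : g (x k + s k) = (g (x k + s k) - g (x k) - H (x k) *m s k) - eps_H *: s k.
  by rewrite -!addrA -!opprD addrA stat subr0.
apply: le_trans (enormB _ _) _; rewrite enormZ gtr0_norm // lerD2r.
by have := enorm_grad_taylor_le f_C2 L_H_ge0 H_lipschitz (segment_in_U kN).
Qed.

Lemma iterates_const k d : (k + d <= N)%N ->
  (forall i, (k <= i < k + d)%N -> ~~ successful i) -> x (k + d) = x k.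
Proof.
elim: d => [|d IH] kdN fail_between; first by rewrite addn0.
rewrite addnS in kdN *.
have fail_kd : ~~ successful (k + d) by apply: fail_between; clear; lia.
have [-> _] := unsuccessful_step kdN fail_kd.
by apply: IH => [|i ki]; [exact: ltnW | apply: fail_between; clear -ki; lia].
Qed.

Lemma successful_cases k : (k < N)%N -> successful k ->
  large k \/ (enorm (s k) < delta k /\ enorm (g (x k.+1)) <= eps_g).
Proof.
move=> kN succ_k; have [s_int|s_bnd] := ltP (enorm (s k)) (delta k).
  have [g_small|g_large] := leP (enorm (g (x k.+1))) eps_g; first by right.
  by left; apply: large_of_grad.
left; apply: large_of_boundary => //.
by apply/eqP; rewrite eq_le s_bnd (step_solution kN).1.
Qed.

(* [x j = x k.+1] has a small gradient, so negative curvature puts [s j] on the boundary *)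
Lemma next_successful_large k j : (k < j)%N -> (j < N)%N -> successful k -> ~~ large k ->
  (forall i, (k < i < j)%N -> ~~ successful i) -> successful j -> large j.
Proof.
move=> kj jN succ_k small_k fail_between succ_j.
have kN : (k < N)%N := ltn_trans kj jN.
have xj : x j = x k.+1.
  rewrite -(subnKC kj); apply: iterates_const => [|i]; rewrite subnKC //; first exact: ltnW.
  exact: fail_between.
have [large_k|[_ g_small]] := successful_cases kN succ_k; first by rewrite large_k in small_k.
have [u curv_lt0] := neg_curv_of_small_grad (leq_ltn_trans kj jN) g_small.
rewrite -xj in curv_lt0.
exact: large_of_boundary jN succ_j (tr_boundary_of_neg_curv (step_solution jN) curv_lt0).
Qed.

Let n_successful m := (\sum_(0 <= i < m) successful i)%N.
Let n_large m := (\sum_(0 <= i < m) large i)%N.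
Let pending m := exists k, [/\ (k < m)%N, successful k, ~~ large k &
  forall i, (k < i < m)%N -> ~~ successful i].

(* each successful step that is not large is followed by a large one, except possibly
   the last, which is then still [pending] *)
Lemma n_successful_le m : (m <= N)%N ->
  (n_successful m <= 2 * n_large m + 1)%N /\
  (~ pending m -> (n_successful m <= 2 * n_large m)%N).
Proof.
elim: m => [|m IH] mN; first by rewrite /n_successful /n_large !big_geq.
have [le_1 le_0] := IH (ltnW mN).
rewrite /n_successful /n_large !big_nat_recr //= -/(n_successful m) -/(n_large m).
have [succ_m|fail_m] := boolP (successful m); last first.
  have -> : large m = false by rewrite /large (negbTE fail_m).
  rewrite !addn0; split=> // not_pending; apply: le_0 => -[k [km succ_k small_k fail_between]].
  apply: not_pending; exists k; split=> //; first exact: ltnW.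
  move=> i /andP[ki]; rewrite ltnS leq_eqVlt => /orP[/eqP-> //|im].
  by apply: fail_between; rewrite ki.
have [large_m|small_m] := boolP (large m); first by rewrite /=; split=> [|_]; clear -le_1; lia.
have not_pending : ~ pending m.
  move=> [k [km succ_k small_k fail_between]].
  by move: small_m; rewrite (next_successful_large km mN succ_k small_k fail_between succ_m).
have := le_0 not_pending; rewrite /= addn0 => le_0'.
split=> [|pending_m1]; first by clear -le_0'; lia.
by case: pending_m1; exists m; split=> // i /andP[mi im]; clear -mi im; lia.
Qed.

Lemma K_M_gt0 : 0 < K * M.
Proof.
have [_ _ K_1 M_1 _] := K_M_bounds.
by rewrite mulr_gt0 ?(lt_le_trans _ K_1) ?(lt_le_trans _ M_1) ?invr_gt0 ?ltr_pwDl ?mulr_ge0.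
Qed.

Lemma n_large_decrease m : (m <= N)%N ->
  (n_large m)%:R * (eta / (2 * (K * M))) <= f (x 0) - f (x m).
Proof.
elim: m => [|m IH] mN; first by rewrite /n_large big_geq // mul0r subrr.
have {}IH := IH (ltnW mN).
rewrite /n_large big_nat_recr //= -/(n_large m) natrD mulrDl.
suff : (large m)%:R * (eta / (2 * (K * M))) <= f (x m) - f (x m.+1) by lra.
have [succ_m|fail_m] := boolP (successful m); last first.
  have -> : large m = false by rewrite /large (negbTE fail_m).
  by have [-> _] := unsuccessful_step mN fail_m; rewrite subrr mul0r.
apply: le_trans (successful_decrease mN succ_m).
have [eta0 _] := andP eta_01; have KM0 := K_M_gt0.
case: (boolP (large m)) => [|_]; last first.
  by rewrite mul0r; apply/mulr_ge0/mulr_ge0/sqr_ge0/divr_ge0; apply/ltW.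
rewrite /large succ_m mul1r /= => one_le.
have KM2 : 0 < 2 * (K * M) by rewrite mulr_gt0.
rewrite ler_pM2l // -(ler_pM2r KM2) mulVf ?gt_eqF //; lra.
Qed.

Lemma n_successful_bound :
  (#|[pred k : 'I_N | successful k]|%:R : R) <= 4 * (f (x 0) - f_low) / eta * K * M + 1.
Proof.
have -> : #|[pred k : 'I_N | successful k]| = n_successful N.
  by rewrite /n_successful -sum1_card big_mkcond big_mkord; apply: eq_bigr => i _; rewrite inE.
have [eta0 _] := andP eta_01; have KM2 : 0 < 2 * (K * M) by rewrite mulr_gt0 ?K_M_gt0.
have := (n_successful_le (leqnn N)).1; rewrite -(ler_nat R) natrD natrM.
have := n_large_decrease (leqnn N); rewrite mulrA ler_pdivrMr //.
set S := n_successful N; set G := n_large N => G_le S_le.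
have -> : 4 * (f (x 0) - f_low) / eta * K * M = 2 * (f (x 0) - f_low) * (2 * (K * M)) / eta.
  by field; rewrite gt_eqF.
suff : 2 * G%:R * eta <= 2 * (f (x 0) - f_low) * (2 * (K * M)) by rewrite -ler_pdivlMr //; lra.
have := ler_wpM2r (ltW KM2) f_low_le; lra.
Qed.

End Algorithm.

Theorem lemma2p4 (R : realType) (n : nat)
  (f : 'cV[R]_n -> R) (g : 'cV[R]_n -> 'cV[R]_n) (H : 'cV[R]_n -> 'M[R]_n)
  (eps_g eps_H gamma1 gamma2 psi delta_max eta : R)
  (x : nat -> 'cV[R]_n) (delta : nat -> R) (s : nat -> 'cV[R]_n)
  (f_low L_g L_H : R) (U : set 'cV[R]_n) (N : nat) :
  (* algorithm parameters *)
  0 < eps_g -> 0 < eps_H ->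
  0 < gamma1 < 1 -> 1 <= gamma2 -> gamma2^-1 < psi <= 1 ->
  0 < delta 0 -> delta 0 <= delta_max -> 0 < eta < 1 ->
  (* standing assumption *)
  (forall k, (k <= N)%N -> f_low <= f (x k)) ->
  0 < L_g -> 0 < L_H ->
  C2_on U f g H ->
  (forall y z, U y -> U z -> enorm (g y - g z) <= L_g * enorm (y - z)) ->
  (forall y z v, U y -> U z ->
     enorm ((H y - H z) *m v) <= L_H * enorm (y - z) * enorm v) ->
  (forall k, (k < N)%N -> forall t : R, 0 <= t <= 1 -> U (x k + t *: s k)) ->
  (* iterations 0, ..., N-1 are completed without termination *)
  (forall k, (k < N)%N -> ~ stationary g H eps_g eps_H (x k)) ->
  (* the steps and updates of Algorithm 1 at iterations 0, ..., N-1 *)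
  (forall k, (k < N)%N ->
     [/\ tr_solution eps_H (g (x k)) (H (x k)) (delta k) (s k),
         eta <= rho_ratio f g H (x k) (s k) ->
           x k.+1 = x k + s k /\
           delta k.+1 = (if psi * delta k <= enorm (s k)
                         then Num.min (gamma2 * delta k) delta_max else delta k)
       & rho_ratio f g H (x k) (s k) < eta ->
           x k.+1 = x k /\ delta k.+1 = gamma1 * enorm (s k)]) ->
  (* number of successful iterations among 0, ..., N-1 *)
  let C_S := 4 * (f (x 0) - f_low) / eta *
     Num.max (delta 0 ^- 2)
       (Num.max (L_H ^+ 2 / (9 * gamma1 ^+ 2 * (1 - eta) ^+ 2)) (1 + 2 * L_H)) in
  (#|[pred k : 'I_N | eta <= rho_ratio f g H (x k) (s k)]|%:R : R) <=
    (Num.floor (C_S * Num.max (eps_H^-1)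
                  (Num.max (eps_g ^- 2 * eps_H) (eps_H ^- 3))))%:~R + 1.
Proof.
move=> eps_g_gt0 eps_H_gt0 gamma1_01 gamma2_ge1 _ delta0_gt0 delta0_le eta_01 f_low_le _
  L_H_gt0 f_C2 _ H_lipschitz segment_in_U not_stationary iteration; cbv zeta.
apply: natr_le_floor_add1.
exact: n_successful_bound eps_g_gt0 eps_H_gt0 gamma1_01 gamma2_ge1 delta0_gt0 delta0_le
  eta_01 (f_low_le N (leqnn N)) L_H_gt0 f_C2 H_lipschitz segment_in_U not_stationary iteration.
Qed.
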